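(* Let $n=|I|\ge 1$ and let $b,\kappa,\kappa_f,\kappa_s$ be positive integers with $\kappa_f<\kappa$, $\kappa_s=\kappa-\kappa_f$, and $\kappa_s\le b$. Let $k^*\in(\mathbb{B}^{n})^{\kappa}$ and $k^{**}\in(\mathbb{B}^{n})^{\kappa_f}$ with $k^{**}\neq (k^*_{\kappa_s+1},\dots,k^*_{\kappa})$. Define $$E^S(i,k)=\mathbb{1}\big[(k\neq k^* )\wedge (k_{1\leftrightarrow\kappa_s}=i_{1\leftrightarrow\kappa_s})\big],$$ $$P=\{(i,k): (k_{\kappa_s+1\leftrightarrow\kappa}\neq k^{**})\wedge(k\neq k^* )\}.$$ Let $f_b:(\mathbb{B}^n)^b\to\mathbb{B}^{m}$ and $f'_b:(\mathbb{B}^n)^b\times(\mathbb{B}^n)^\kappa\to\mathbb{B}^{m}$ be functions such that, for all $(i,k)$, $f'_b(i,k)\neq f_b(i)$ if and only if $E^S(i,k)=1$ or $(i,k)\in P$. Then every set $D\subseteq(\mathbb{B}^n)^b$ of input sequences with the property that for every key $k\neq k^*$ there exists $i\in D$ with $f'_b(i,k)\neq f_b(i)$ satisfies $|D|\ge 2^{\kappa_s n}$. In particular, any input sequence $i$ detects (i.e. satisfies $f'_b(i,k)\ne f_b(i)$ for) at most one key $k$ with suffix $k_{\kappa_s+1\leftrightarrow\kappa}=k^{**}$.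
   Context: $\mathbb{B}=\{0,1\}$. An input sequence is $i=(i_1,\dots,i_b)$ with each $i_j\in\mathbb{B}^n$ (the input applied in clock cycle $j$ of the $b$-unrolled encrypted circuit), and a key sequence is $k=(k_1,\dots,k_\kappa)$ with each $k_j\in\mathbb{B}^n$. For a sequence $s$, $s_{p\leftrightarrow q}$ denotes the subsequence $(s_p,\dots,s_q)$. $f_b$ is the function of the $b$-unrolled original circuit and $f'_b$ that of the $b$-unrolled encrypted circuit (after the $\kappa$ key cycles); $k^*$ is the correct key. An input sequence $i$ with $f'_b(i,k)\neq f_b(i)$ is said to detect (rule out) the wrong key $k$; the set $D$ models the set of distinguishing input patterns (DIPs) used by the SAT attack, so the conclusion states that the SAT attack needs at least $2^{\kappa_s n}$ DIPs. *)

From mathcomp Require Import all_boot.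
Set Implicit Arguments. Unset Strict Implicit. Unset Printing Implicit Defensive.

Definition word (n : nat) := {ffun 'I_n -> bool}.
(* A sequence of l words, (B^n)^l; index j : 'I_l is cycle j+1 (0-based). *)
Definition wseq (n l : nat) := {ffun 'I_l -> word n}.

Definition zero_word (n : nat) : word n := [ffun _ => false].

(* s_(j+1) for a 0-based natural index j (default word if out of range). *)
Definition getw (n l : nat) (s : wseq n l) (j : nat) : word n :=
  if insub j is Some o then s o else zero_word n.

Definition prefix_eq (n b kappa ks : nat) (i : wseq n b) (k : wseq n kappa) : Prop :=
  forall j, j < ks -> getw k j = getw i j.

Definition suffix_eq (n kappa ks kf : nat) (k : wseq n kappa) (k2 : wseq n kf) : Prop :=
  forall j : 'I_kf, getw k (ks + j) = k2 j.

Definition ES (n b kappa ks : nat) (kstar : wseq n kappa)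
  (i : wseq n b) (k : wseq n kappa) : Prop :=
  k <> kstar /\ prefix_eq ks i k.

Definition inP (n b kappa ks kf : nat) (kstar : wseq n kappa) (k2 : wseq n kf)
  (i : wseq n b) (k : wseq n kappa) : Prop :=
  ~ suffix_eq ks k k2 /\ k <> kstar.

From mathcomp Require Import all_boot.
Set Implicit Arguments. Unset Strict Implicit. Unset Printing Implicit Defensive.

(* On keys with suffix [k**] the error set [P] is empty, so such a key is
   detected by [i] only through [E^S], i.e. only when its first [ks] words are
   those of [i].  These [2^(ks n)] keys are all wrong (their suffix differs from
   that of [k*]), and an input sequence detects at most one of them: a DIP set
   therefore needs one input sequence per prefix. *)

Section KeySplicing.

Variables (n ks kf kappa : nat).
Hypothesis ks_kf : ks + kf = kappa.

Lemma getwE l (s : wseq n l) (o : 'I_l) : getw s o = s o.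
Proof.
rewrite /getw; case: insubP => [u _ /val_inj -> //|]; by rewrite ltn_ord.
Qed.

Lemma card_wseq l : #|{: wseq n l}| = 2 ^ (l * n).
Proof. by rewrite card_ffun card_ffun card_bool !card_ord -expnM mulnC. Qed.

Definition splice (p : wseq n ks) (q : wseq n kf) : wseq n kappa :=
  [ffun o : 'I_kappa => if val o < ks then getw p o else getw q (val o - ks)].

Lemma getw_splice_prefix p q j : j < ks -> getw (splice p q) j = getw p j.
Proof.
move=> lt_j_ks; have lt_j : j < kappa by rewrite -ks_kf ltn_addr.
by rewrite (getwE _ (Ordinal lt_j)) ffunE /= lt_j_ks.
Qed.

Lemma suffix_eq_splice p q : suffix_eq ks (splice p q) q.
Proof.
move=> j; have lt_j : ks + j < kappa by rewrite -ks_kf ltn_add2l.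
by rewrite (getwE _ (Ordinal lt_j)) ffunE /= ltnNge leq_addr /= addKn getwE.
Qed.

Lemma prefix_suffix_eq_inj b (i : wseq n b) (q : wseq n kf) (k k' : wseq n kappa) :
  prefix_eq ks i k -> prefix_eq ks i k' ->
  suffix_eq ks k q -> suffix_eq ks k' q -> k = k'.
Proof.
move=> pre_k pre_k' suf_k suf_k'; apply/ffunP => o; rewrite -!getwE.
have [lt_o_ks|le_ks_o] := ltnP o ks; first by rewrite pre_k // pre_k'.
have lt_o : o - ks < kf by rewrite ltn_subLR // ks_kf.
by rewrite -(subnKC le_ks_o) -[o - ks]/(val (Ordinal lt_o)) suf_k suf_k'.
Qed.

End KeySplicing.

Lemma prefix_cover_card n b ks (D : {set wseq n b}) :
  (forall p : wseq n ks, exists2 i, i \in D & forall j, j < ks -> getw p j = getw i j) ->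
  2 ^ (ks * n) <= #|D|.
Proof.
move=> cover; pose pre (i : wseq n b) : wseq n ks := [ffun j : 'I_ks => getw i j].
have /subset_leq_card : [set: wseq n ks] \subset pre @: D.
  apply/subsetP => p _; have [i iD pre_i] := cover p.
  by apply/imsetP; exists i => //; apply/ffunP => j; rewrite ffunE -getwE pre_i.
rewrite cardsT card_wseq => /leq_trans; apply; exact: leq_imset_card.
Qed.

Theorem theorem1 (n b kappa kf ks m : nat)
  (Hn : 1 <= n) (Hb : 0 < b) (Hkf : 0 < kf) (Hks0 : 0 < ks)
  (Hkfk : kf < kappa) (Hks : ks = kappa - kf) (Hksb : ks <= b)
  (kstar : wseq n kappa) (k2 : wseq n kf)
  (Hk2 : ~ suffix_eq ks kstar k2)
  (f : wseq n b -> {ffun 'I_m -> bool})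
  (f' : wseq n b -> wseq n kappa -> {ffun 'I_m -> bool})
  (Hf : forall i k, f' i k <> f i <-> (ES ks kstar i k \/ inP ks kstar k2 i k)) :
  (forall D : {set wseq n b},
     (forall k, k <> kstar -> exists2 i, i \in D & f' i k <> f i) ->
     2 ^ (ks * n) <= #|D|)
  /\
  (forall (i : wseq n b) (k k' : wseq n kappa),
     suffix_eq ks k k2 -> suffix_eq ks k' k2 ->
     f' i k <> f i -> f' i k' <> f i -> k = k').
Proof.
have ks_kf : ks + kf = kappa by rewrite Hks subnK // ltnW.
have detect_prefix i k : suffix_eq ks k k2 -> f' i k <> f i -> prefix_eq ks i k.
  by move=> suf_k /Hf [[_ pre_k] | [not_suf_k _]].
split=> [D DIPs | i k k' suf_k suf_k' det_k det_k'].
  apply: prefix_cover_card => p.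
  have suf_p := suffix_eq_splice ks_kf p k2.
  have [|i iD det_i] := DIPs (splice kappa p k2); first by move=> E; apply: Hk2; rewrite -E.
  exists i => // j lt_j; rewrite -(getw_splice_prefix ks_kf p k2 lt_j).
  exact: detect_prefix.
exact: (prefix_suffix_eq_inj ks_kf (detect_prefix _ _ suf_k det_k)
          (detect_prefix _ _ suf_k' det_k') suf_k suf_k').
Qed.
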